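(* Let $p$ be an odd prime, let $G$ be a proper subgroup of the multiplicative group $\mathbb{F}_p^*=\mathbb{F}_p\setminus\{0\}$, and let $\lambda\in G$. Then there do not exist sets $A,B\subseteq \mathbb{F}_p^*$ with $|A|\ge 2$ and $|B|\ge 2$ such that \[ AB=(G-\lambda)\setminus\{0\}. \]
   Context: $\mathbb{F}_p$ denotes the field with $p$ elements. For $A,B\subseteq\mathbb{F}_p$, the product set is $AB=\{ab: a\in A,\ b\in B\}$, and $G-\lambda=\{g-\lambda: g\in G\}$. *)

From mathcomp Require Import all_boot all_order all_algebra all_fingroup.
Set Implicit Arguments. Unset Strict Implicit. Unset Printing Implicit Defensive.
Import GRing.Theory.
Local Open Scope ring_scope.

Definition prodset (R : finNzRingType) (A B : {set R}) : {set R} :=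
  [set a * b | a in A, b in B].

Definition shift_nonzero (R : finUnitRingType) (G : {set {unit R}}) (lam : R)
  : {set R} :=
  [set (val g - lam) | g in G] :\ 0.

From mathcomp Require Import all_boot all_order all_algebra all_fingroup cyclic.
From mathcomp Require Import zify ring.
Set Implicit Arguments. Unset Strict Implicit. Unset Printing Implicit Defensive.
Import GRing.Theory FinRing.Theory.
Local Open Scope ring_scope.

(* Stepanov's method.  Write d = |G|, m = |A|, n = |B| and l = lam.  Every s in AB
   satisfies (s + l)^d = 1, so the polynomial
     f(X) = c_0 + sum_(b in B) c_b (b X + l)^(d + n - 1),
   with c_0 and c_b chosen so that sum_b c_b b^k = 0 for 0 < k < n but not for k = n,
   vanishes to order n at 0 and at every a in A while having degree d + n - 1.  Hence
   n (m + 1) <= d + n - 1, i.e. mn <= d - 1 = |AB| <= mn, so f is a scalar multiple of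
   X^n prod_a (X - a)^n, and comparing the coefficients of X^n and X^(n+1) yields
   (d - 1) sum_b b = - l n (n + 1) sum_a 1/a, and symmetrically with A and B swapped.
   Together with  sum_a a * sum_b b = sum_(g in G) (g - l) = - d l  and
   sum_a 1/a * sum_b 1/b = sum_(g <> l) 1/(g - l) = - (d - 1) / (2 l),  where g and l^2/g
   pair off, these force (mn)^2 (m - 1) (n - 1) = 0, which is impossible in characteristic
   p > 2d; and 2d <= p - 1 because d is a proper divisor of p - 1. *)

Definition char_gt (R : nzRingType) (N : nat) :=
  forall k, (0 < k <= N)%N -> k%:R != 0 :> R.

Lemma char_gt_le (R : nzRingType) M N : (N <= M)%N -> char_gt R M -> char_gt R N.
Proof. by move=> NM hM k /andP[k0 kN]; apply: hM; rewrite k0 (leq_trans kN). Qed.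

Lemma char_gt_Fp p : prime p -> char_gt 'F_p p.-1.
Proof.
move=> p_pr k /andP[k0 kp]; rewrite -(dvdn_pcharf (pchar_Fp p_pr)).
by apply: contraTN kp => /(dvdn_leq k0); lia.
Qed.

Lemma char_gt_fact (R : idomainType) N : char_gt R N -> N`!%:R != 0 :> R.
Proof.
move=> hN; rewrite fact_prod big_add1 /= natr_prod prodf_seq_neq0.
by apply/allP => k; rewrite mem_index_iota => /andP[_ kN]; apply: hN.
Qed.

Lemma char_gt_bin (R : idomainType) N j :
  char_gt R N -> (j <= N)%N -> 'C(N, j)%:R != 0 :> R.
Proof.
move=> hN jN; have := char_gt_fact hN; rewrite -(bin_fact jN) natrM.
by apply: contraNneq => ->; rewrite mul0r.
Qed.

Lemma coef_linear_exp (R : comNzRingType) (b e : R) k j :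
  ((b *: 'X + e%:P) ^+ k)`_j = (b ^+ j * e ^+ (k - j)) *+ 'C(k, j).
Proof.
elim: k j => [|k IH] [|j]; rewrite ?expr0 ?coef1 ?bin0 ?mulr1 //;
  rewrite exprS mulrDl -scalerAl coefD coefZ coefCM coefXM /=.
  by rewrite mulr0 add0r IH bin0 !mulr1n !mul1r subn0 exprS.
rewrite !IH binS mulrnDr addrC !mulrnAr.
congr (_ + _); last by rewrite mulrA -exprS subSS.
have [jk | kj] := leqP j.+1 k; last by rewrite bin_small // !mulr0n.
by rewrite mulrCA -exprS; congr (_ * (_ ^+ _) *+ _); lia.
Qed.

Lemma comp_linear (R : comNzRingType) (b e x : R) :
  (b *: 'X + e%:P) \Po ('X + x%:P) = b *: 'X + (x * b + e)%:P.
Proof.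
rewrite comp_polyD comp_polyZ comp_polyX comp_polyC scalerDr -addrA polyCD.
by rewrite scale_polyC mulrC.
Qed.

Lemma dvdp_XsubC_exp_taylor (R : fieldType) n x (f : {poly R}) :
  (forall j, (j < n)%N -> (f \Po ('X + x%:P))`_j = 0) -> ('X - x%:P) ^+ n %| f.
Proof.
move=> low; rewrite -(comp_polyXaddC_K f x).
set g := f \Po _; rewrite -(poly_take_drop n g).
have -> : take_poly n g = 0.
  by apply/polyP => i; rewrite coef_take_poly coef0; case: ifP => // /low.
rewrite add0r comp_polyM rmorphXn /= comp_polyX.
exact: dvdp_mull (dvdpp _).
Qed.

Lemma coef1_prod (R : comNzRingType) (I : Type) (r : seq I) (P : pred I)
    (F : I -> {poly R}) (s : I -> R) :
  (forall i, P i -> (F i)`_1 = (F i)`_0 * s i) ->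
  (\prod_(i <- r | P i) F i)`_1 = (\prod_(i <- r | P i) F i)`_0 * \sum_(i <- r | P i) s i.
Proof.
move=> Fs; apply: (big_rec2 (fun (p : {poly R}) t => p`_1 = p`_0 * t)).
  by rewrite coef1 mulr0.
move=> i p t Pi p1.
by rewrite coefM !big_ord_recl big_ord0 coef0M p1 Fs //=; ring.
Qed.

Lemma coef1_exp (R : comNzRingType) (p : {poly R}) s k :
  p`_1 = p`_0 * s -> (p ^+ k)`_1 = (p ^+ k)`_0 * (s *+ k).
Proof.
move=> p1; rewrite -(card_ord k) -!prodr_const -sumr_const.
exact: coef1_prod.
Qed.

Lemma eqp_coef_cross (R : idomainType) (p q : {poly R}) i j :
  p %= q -> p`_i * q`_j = p`_j * q`_i.
Proof.
case/eqpP=> -[c1 c2] /andP[c1_neq0 _] /= /polyP pq.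
apply: (mulfI c1_neq0); rewrite !mulrA -!coefZ !pq !coefZ; ring.
Qed.

Lemma prod_XsubC_exp_dvdp (R : fieldType) (s : seq R) n (f : {poly R}) :
  uniq s -> (forall x, x \in s -> ('X - x%:P) ^+ n %| f) ->
  \prod_(x <- s) ('X - x%:P) ^+ n %| f.
Proof.
elim: s => [|x s IH] /=; first by rewrite big_nil dvd1p.
move=> /andP[xs us] hf; rewrite big_cons Gauss_dvdp.
  by rewrite hf ?mem_head // IH // => y ys; apply: hf; rewrite in_cons ys orbT.
apply: coprimep_expl; rewrite coprimep_sym coprimep_XsubC rootE horner_prod.
rewrite prodf_seq_neq0; apply/allP => y ys /=; rewrite horner_exp hornerXsubC.
by rewrite expf_neq0 // subr_eq0; apply: contraNneq xs => ->.
Qed.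

Lemma size_prod_XsubC_exp (R : idomainType) (s : seq R) n :
  size (\prod_(x <- s) ('X - x%:P) ^+ n) = (size s * n).+1.
Proof.
rewrite prodrXl -[LHS]prednK ?size_exp ?size_prod_XsubC // size_poly_gt0.
by rewrite expf_neq0 // monic_neq0 // monic_prod_XsubC.
Qed.

Section Moments.
Variables (F : finFieldType) (B : {set F}).

Definition moment (c : F -> F) k := \sum_(b in B) c b * b ^+ k.

Lemma moment_enum c k : moment c k = \sum_(i < #|B|) c (enum_val i) * enum_val i ^+ k.
Proof. exact: (big_enum_val (fun b => c b * b ^+ k)). Qed.

Lemma exists_moment_kernel : (0 < #|B|)%N ->
  exists2 w : F -> F, (exists2 b, b \in B & w b != 0) &
    forall k, (k < #|B|.-1)%N -> moment w k = 0.
Proof.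
move=> B_gt0; have /card_gt0P[b0 Bb0] := B_gt0.
pose M : 'M[F]_(#|B|, #|B|.-1) := \matrix_(i, k) enum_val i ^+ k.
have /rowV0Pn[v /sub_kermxP vM /rV0Pn[i vi]] : kermx M != 0.
  by rewrite -mxrank_eq0 mxrank_ker; have := rank_leq_col M; lia.
exists (fun b => v 0 (enum_rank_in Bb0 b)).
  by exists (enum_val i); rewrite ?enum_valP ?enum_valK_in.
move=> k kB; have /matrixP/(_ 0 (Ordinal kB)) := vM; rewrite !mxE => vMk.
rewrite moment_enum -[RHS]vMk; apply: eq_bigr => j _; by rewrite enum_valK_in mxE.
Qed.

Lemma moments_eq0 (w : F -> F) :
  (forall k, (k < #|B|)%N -> moment w k = 0) -> {in B, forall b, w b = 0}.
Proof.
move=> wk b Bb; rewrite -(enum_rankK_in Bb Bb).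
pose V : 'M[F]_#|B| := Vandermonde #|B| (\row_i enum_val i).
have V_unit : V \in unitmx.
  rewrite unitmxE det_Vandermonde unitfE; apply/prodf_neq0 => i _.
  apply/prodf_neq0 => j ij; rewrite !mxE subr_eq0 (inj_eq enum_val_inj).
  by rewrite eq_sym neq_ltn ij.
have VW : V *m \col_i w (enum_val i) = 0.
  apply/matrixP => k j; rewrite !mxE -[RHS](wk k (ltn_ord k)) moment_enum.
  by apply: eq_bigr => i _; rewrite !mxE mulrC.
have /matrixP/(_ (enum_rank_in Bb b) 0) := congr1 (mulmx (invmx V)) VW.
by rewrite mulKmx // mulmx0 !mxE.
Qed.

Lemma moment_succ c : (forall k, (0 < k < #|B|)%N -> moment c k = 0) ->
  moment c #|B|.+1 = (\sum_(b in B) b) * moment c #|B|.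
Proof.
move=> low; have [B0 | B_gt0] := posnP #|B|.
  by rewrite /moment (cards0_eq B0) !big_set0 mulr0.
pose P := \prod_(b <- enum B) ('X - b%:P).
have sizeP : size P = #|B|.+1 by rewrite size_prod_XsubC cardE.
have P_lead : P`_#|B| = 1.
  by have /monicP := monic_prod_XsubC (enum B) predT id; rewrite lead_coefE sizeP.
have P_next : P`_#|B|.-1 = - \sum_(b in B) b.
  by rewrite cardE coefPn_prod_XsubC -?cardE -?lt0n // big_enum.
have : \sum_(b in B) c b * b * P.[b] = 0.
  apply: big1 => b Bb; rewrite /P horner_prod big_enum /=.
  by rewrite (bigD1 b) //= hornerXsubC subrr mul0r mulr0.
under eq_bigr do rewrite (horner_coef_wide _ (eq_leq sizeP)) mulr_sumr.
rewrite exchange_big /=.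
under eq_bigr do under eq_bigr do rewrite mulrCA -mulrA -exprS.
under eq_bigr => k _ do rewrite -mulr_sumr -/(moment c k.+1).
rewrite -(prednK B_gt0) !big_ord_recr /= big1 ?add0r => [|k _]; last first.
  by rewrite low ?mulr0 //= -ltn_predRL.
rewrite (prednK B_gt0) P_lead P_next mul1r mulNr addrC => /eqP.
by rewrite subr_eq0 => /eqP.
Qed.

End Moments.

Section StepanovPolynomial.
Variables (F : finFieldType) (B : {set F}).

Definition stepanov_poly (c0 : F) (c e : F -> F) k : {poly F} :=
  c0%:P + \sum_(b in B) c b *: (b *: 'X + (e b)%:P) ^+ k.

Lemma coef_stepanov_poly c0 c e k j :
  (stepanov_poly c0 c e k)`_j =
    (if j == 0%N then c0 else 0) + (\sum_(b in B) c b * (b ^+ j * e b ^+ (k - j))) *+ 'C(k, j).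
Proof.
rewrite coefD coefC coef_sum -sumrMnl; congr (_ + _).
by apply: eq_bigr => b _; rewrite coefZ coef_linear_exp mulrnAr.
Qed.

Lemma stepanov_poly_shift c0 c e k x :
  stepanov_poly c0 c e k \Po ('X + x%:P) = stepanov_poly c0 c (fun b => x * b + e b) k.
Proof.
rewrite comp_polyD comp_polyC linear_sum; congr (_ + _); apply: eq_bigr => b _.
by rewrite /= comp_polyZ rmorphXn /= comp_linear.
Qed.

Lemma dvdp_stepanov_poly n d c0 c l x :
  char_gt F n.-1 -> stepanov_poly c0 c (fun=> l) n.-1 = 0 ->
  {in B, forall b, (x * b + l) ^+ d = 1} ->
  ('X - x%:P) ^+ n %| stepanov_poly c0 c (fun=> l) (d + n.-1).
Proof.
(* As (x b + l)^d = 1, lowering the exponent from d + n.-1 to n.-1 leaves the Taylor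
   coefficients of order < n at x unchanged, and those of the lowered polynomial are 0. *)
move=> charF base root_d; apply: dvdp_XsubC_exp_taylor => j jn.
have := congr1 (fun p => (p \Po ('X + x%:P))`_j) base.
rewrite /= comp_poly0 coef0 !stepanov_poly_shift !coef_stepanov_poly => base_j.
have drop_d b : b \in B -> (x * b + l) ^+ (d + n.-1 - j) = (x * b + l) ^+ (n.-1 - j).
  by move=> Bb; rewrite -addnBA ?exprD ?root_d ?mul1r //; lia.
under eq_bigr => b Bb do rewrite drop_d //.
case: j jn base_j {drop_d} => [|j] jn; first by rewrite !bin0.
rewrite !add0r => /eqP; rewrite -mulr_natr mulf_eq0 (negbTE (char_gt_bin charF _)) ?orbF //.
  by move/eqP ->; rewrite mul0rn.
by lia.
Qed.

End StepanovPolynomial.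

Section Stepanov.
Variables (F : finFieldType) (d : nat) (l : F) (A B : {set F}).
Hypotheses (A0 : 0 \notin A) (B0 : 0 \notin B) (B_gt0 : (0 < #|B|)%N).
Hypotheses (d_gt1 : (1 < d)%N) (l_neq0 : l != 0) (l_d : l ^+ d = 1).
Hypothesis AB_d : {in A & B, forall a b, (a * b + l) ^+ d = 1}.
Hypothesis charF : char_gt F (d + #|B|.-1).

Local Notation n := #|B|.
Local Notation N := (d + #|B|.-1)%N.

Section Coefficients.
Variable c : F -> F.
Hypotheses (c_low : forall k, (0 < k < n)%N -> moment B c k = 0) (c_top : moment B c n != 0).

Let c0 := - l ^+ n.-1 * \sum_(b in B) c b.
Let aux := stepanov_poly B c0 c (fun=> l) N.
Let rootsA := \prod_(a in A) ('X - a%:P) ^+ n.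

Lemma stepanov_aux_base : stepanov_poly B c0 c (fun=> l) n.-1 = 0.
Proof.
apply/polyP => -[|j]; rewrite coef_stepanov_poly coef0 /=.
  rewrite bin0 subn0 /c0 mulr_sumr -big_split big1 //= => b _.
  by rewrite expr0 mul1r mulNr mulrC addNr.
rewrite add0r; have [jn | nj] := ltnP j.+1 n; last first.
  by rewrite bin_small ?mulr0n // (leq_trans _ nj) // ltn_predL.
under eq_bigr do rewrite mulrA.
by rewrite -mulr_suml -/(moment B c j.+1) c_low ?mul0r ?mul0rn.
Qed.

Lemma coef_stepanov_aux j : (0 < j)%N -> aux`_j = (moment B c j * l ^+ (N - j)) *+ 'C(N, j).
Proof.
move=> j_gt0; rewrite /aux coef_stepanov_poly gtn_eqF // add0r mulr_suml.
by congr (_ *+ _); apply: eq_bigr => b _; rewrite mulrA.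
Qed.

Lemma stepanov_aux_neq0 : aux != 0.
Proof.
apply: contraNneq c_top => f0; have := coef_stepanov_aux B_gt0.
rewrite f0 coef0 => /esym/eqP; rewrite -mulr_natr !mulf_eq0 expf_eq0 (negbTE l_neq0).
rewrite (negbTE (char_gt_bin charF _)) ?andbF ?orbF => [/eqP //|]; lia.
Qed.

Lemma size_stepanov_aux : (size aux <= N.+1)%N.
Proof.
apply/leq_sizeP => j Nj; rewrite coef_stepanov_aux ?bin_small ?mulr0n //; lia.
Qed.

Lemma stepanov_roots_enum :
  'X^n * rootsA = \prod_(x <- 0 :: enum A) ('X - x%:P) ^+ n.
Proof. by rewrite big_cons subr0 big_enum. Qed.

Lemma dvdp_stepanov_roots_aux : 'X^n * rootsA %| aux.
Proof.
rewrite stepanov_roots_enum; apply: prod_XsubC_exp_dvdp => [|x].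
  by rewrite /= mem_enum A0 enum_uniq.
rewrite in_cons mem_enum => /predU1P[-> | Ax]; apply: dvdp_stepanov_poly.
- by apply: char_gt_le charF; lia.
- exact: stepanov_aux_base.
- by move=> b _; rewrite mul0r add0r.
- by apply: char_gt_le charF; lia.
- exact: stepanov_aux_base.
- by move=> b Bb; apply: AB_d.
Qed.

Lemma size_stepanov_roots : size ('X^n * rootsA) = (n * #|A|.+1).+1.
Proof.
by rewrite stepanov_roots_enum size_prod_XsubC_exp /= -cardE mulnC.
Qed.

Lemma stepanov_bound_of : (n * #|A|.+1 <= N)%N.
Proof.
rewrite -ltnS -size_stepanov_roots (leq_trans _ size_stepanov_aux) //.
exact: dvdp_leq stepanov_aux_neq0 dvdp_stepanov_roots_aux.
Qed.

Lemma coef0_stepanov_rootsA_neq0 : rootsA`_0 != 0.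
Proof.
rewrite -horner_coef0 /rootsA horner_prod; apply/prodf_neq0 => a Aa.
by rewrite horner_exp hornerXsubC sub0r expf_neq0 // oppr_eq0; apply: contraNneq A0 => <-.
Qed.

Lemma coef1_stepanov_rootsA : rootsA`_1 = - rootsA`_0 * (n%:R * \sum_(a in A) a^-1).
Proof.
rewrite /rootsA (@coef1_prod _ _ _ _ _ (fun a => (- a)^-1 *+ n)) => [|a Aa]; last first.
  apply: coef1_exp; rewrite !coefB !coefX !coefC /= subr0 sub0r mulfV // oppr_eq0.
  by apply: contraNneq A0 => <-.
have -> : \sum_(a in A) (- a)^-1 *+ n = - (n%:R * \sum_(a in A) a^-1).
  rewrite mulr_natl sumrMnl -mulNrn -sumrN; congr (_ *+ _).
  by apply: eq_bigr => a _; rewrite invrN.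
by rewrite mulrN mulNr.
Qed.

Lemma stepanov_identity_of : (n * #|A|.+1 = N)%N ->
  (d.-1)%:R * \sum_(b in B) b = - l * (n * n.+1)%:R * \sum_(a in A) a^-1.
Proof.
move=> eqN; have QF : 'X^n * rootsA %= aux.
  rewrite -dvdp_size_eqp ?dvdp_stepanov_roots_aux // size_stepanov_roots eqN eqn_leq.
  rewrite size_stepanov_aux -eqN -size_stepanov_roots.
  by rewrite (dvdp_leq stepanov_aux_neq0 dvdp_stepanov_roots_aux).
have := eqp_coef_cross n n.+1 QF; rewrite !coefXnM ltnn subnn ltnNge leqnSn /= subSnn.
rewrite (coef_stepanov_aux (ltn0Sn n)) (coef_stepanov_aux B_gt0) moment_succ //.
rewrite coef1_stepanov_rootsA -[_ *+ 'C(N, n.+1)]mulr_natr -[_ *+ 'C(N, n)]mulr_natr => cross.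
have hb : (n.+1)%:R * 'C(N, n.+1)%:R = (d.-1)%:R * 'C(N, n)%:R :> F.
  by rewrite -!natrM mul_bin_left; congr (_ * _)%:R; lia.
have hl : l ^+ (N - n) = l * l ^+ (N - n.+1) by rewrite -exprS; congr (_ ^+ _); lia.
pose K := rootsA`_0 * moment B c n * l ^+ (N - n.+1) * 'C(N, n)%:R.
have K_neq0 : K != 0.
  rewrite !mulf_neq0 ?coef0_stepanov_rootsA_neq0 ?expf_neq0 ?(char_gt_bin charF) //; lia.
apply: (mulfI K_neq0); transitivity ((n.+1)%:R * (rootsA`_0 * ((\sum_(b in B) b) *
    moment B c n * l ^+ (N - n.+1) * 'C(N, n.+1)%:R))).
  transitivity (rootsA`_0 * moment B c n * l ^+ (N - n.+1) * (\sum_(b in B) b) *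
    ((d.-1)%:R * 'C(N, n)%:R)); first by rewrite /K; ring.
  by rewrite -hb; ring.
by rewrite cross hl natrM /K; ring.
Qed.

End Coefficients.

Lemma exists_stepanov_coefficients : exists2 c : F -> F,
  forall k, (0 < k < n)%N -> moment B c k = 0 & moment B c n != 0.
Proof.
have [w [b Bb wb] w_low] := exists_moment_kernel B_gt0.
have shift k : moment B (fun b => w b / b) k.+1 = moment B w k.
  apply: eq_bigr => x Bx; rewrite exprS mulrA divfK //.
  by apply: contraNneq B0 => x0; rewrite -x0.
exists (fun b => w b / b) => [k /andP[k_gt0 kn] | ].
  by rewrite -(prednK k_gt0) shift w_low // ltn_predRL (prednK k_gt0).
rewrite -[n](prednK B_gt0) shift; apply: contra wb => /eqP w_top.
apply/eqP/(moments_eq0 _ Bb) => k kn; have [k_lt | k_ge] := ltnP k n.-1.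
  exact: w_low.
have -> : k = n.-1 by apply/eqP; rewrite eqn_leq k_ge andbT -ltnS prednK.
exact: w_top.
Qed.

Lemma stepanov_bound : (n * #|A|.+1 <= N)%N.
Proof. by have [c c_low c_top] := exists_stepanov_coefficients; apply: stepanov_bound_of c_top. Qed.

Lemma stepanov_identity : (n * #|A|.+1 = N)%N ->
  (d.-1)%:R * \sum_(b in B) b = - l * (n * n.+1)%:R * \sum_(a in A) a^-1.
Proof.
by have [c c_low c_top] := exists_stepanov_coefficients; apply: stepanov_identity_of c_top.
Qed.

End Stepanov.

Section ProductSets.
Variable F : finFieldType.
Implicit Types A B : {set F}.

Lemma prodsetC A B : prodset A B = prodset B A.
Proof.
by apply/setP => x; apply/imset2P/imset2P => -[a b Aa Bb ->]; exists b a => //; rewrite mulrC.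
Qed.

Lemma card_prodset_le A B : (#|prodset A B| <= #|A| * #|B|)%N.
Proof.
by rewrite /prodset curry_imset2X -cardsX leq_imset_card.
Qed.

Lemma card_prodset_ge A B a : a \in A -> a != 0 -> (#|B| <= #|prodset A B|)%N.
Proof.
move=> Aa a_neq0; rewrite -(card_imset B (mulfI a_neq0)) subset_leq_card //.
by apply/subsetP => _ /imsetP[b Bb ->]; apply: imset2_f.
Qed.

Lemma sum_prodset A B (f : F -> F) : #|prodset A B| = (#|A| * #|B|)%N ->
  \sum_(s in prodset A B) f s = \sum_(a in A) \sum_(b in B) f (a * b).
Proof.
move=> card_AB; rewrite pair_big_dep /prodset curry_imset2X big_imset /=.
  by apply: eq_big => [[a b] | [a b] _]; rewrite ?inE.
by apply/imset_injP; rewrite cardsX -card_AB /prodset curry_imset2X.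
Qed.

End ProductSets.

Lemma unit_val_neq0 (F : finFieldType) (u : {unit F}) : val u != 0.
Proof. by rewrite -unitfE (valP u). Qed.

Section ShiftedSubgroup.
Variables (F : finFieldType) (G : {group {unit F}}) (lam : {unit F}).
Hypothesis lamG : lam \in G.

Let shift_inj : injective (fun g : {unit F} => val g - val lam).
Proof. by move=> g h /addIr /val_inj. Qed.

Let shift_mem0 : 0 \in [set val g - val lam | g in G].
Proof. by apply/imsetP; exists lam; rewrite ?subrr. Qed.

Lemma card_shift_nonzero : #|shift_nonzero G (val lam)| = #|G|.-1.
Proof.
have := cardsD1 0 [set val g - val lam | g in G].
by rewrite shift_mem0 card_imset // add1n => ->.
Qed.

Lemma sum_shift_nonzero (f : F -> F) : f 0 = 0 ->
  \sum_(s in shift_nonzero G (val lam)) f s = \sum_(g in G) f (val g - val lam).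
Proof.
move=> f0; rewrite -(big_imset f (in2W shift_inj)) (big_setD1 _ shift_mem0) /= f0 add0r.
by apply: eq_bigl => s; rewrite !inE.
Qed.

Lemma shift_nonzero_exp s : s \in shift_nonzero G (val lam) -> (s + val lam) ^+ #|G| = 1.
Proof.
by case/setD1P=> _ /imsetP[g Gg ->]; rewrite subrK -val_unitX expg_cardG.
Qed.

Lemma sum_subgroup_val : (1 < #|G|)%N -> \sum_(g in G) val g = 0.
Proof.
rewrite -[(1 < _)%N]negbK -leqNgt -trivg_card_le1 => /trivgPn[h Gh h_neq1].
have rotate : \sum_(g in G) val g = val h * \sum_(g in G) val g.
  rewrite mulr_sumr (reindex_inj (mulgI h)) /=.
  by apply: eq_big => [g | g _]; rewrite ?groupMl ?val_unitM.
have : (1 - val h) * \sum_(g in G) val g = 0 by rewrite mulrBl mul1r -rotate subrr.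
move/eqP; rewrite mulf_eq0 subr_eq0 => /orP[/eqP/esym h1 | /eqP //].
by case/eqP: h_neq1; apply: val_inj.
Qed.

Lemma sum_inv_shift : (\sum_(g in G) (val g - val lam)^-1) *+ 2 = - (val lam)^-1 *+ #|G|.-1.
Proof.
set l := val lam; have l_neq0 : l != 0 := unit_val_neq0 lam.
have mirror_inj : injective (fun g : {unit F} => lam * lam * g^-1)%g.
  by move=> g h /mulgI /invg_inj.
have mirror : \sum_(g in G) (val g - l)^-1 = \sum_(g in G) (l * l / val g - l)^-1.
  rewrite [LHS](reindex_inj mirror_inj); apply: eq_big => g //=.
  by rewrite groupMl ?groupM ?groupV.
have pair g : g != lam -> (val g - l)^-1 + (l * l / val g - l)^-1 = - l^-1.
  move=> g_neq; have g_neq0 := unit_val_neq0 g.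
  have gl : val g - l != 0 by rewrite subr_eq0 (inj_eq val_inj).
  have lg : l - val g != 0 by rewrite subr_eq0 eq_sym (inj_eq val_inj).
  rewrite (_ : l * l / val g - l = l * (l - val g) / val g); last by field.
  by field; rewrite l_neq0 g_neq0 gl lg.
rewrite mulr2n {2}mirror -big_split (big_setD1 lam lamG) /= subrr invr0 add0r.
rewrite mulfK // subrr invr0 add0r (eq_bigr (fun=> - l^-1)).
  by rewrite sumr_const (cardsD1 lam G) lamG.
by move=> g /setD1P[g_neq _]; apply: pair.
Qed.

End ShiftedSubgroup.

Lemma prodset_relations_degenerate (F : fieldType) (l x y SA SB IA IB : F) : l != 0 ->
  x * y * SB = - l * (y * (y + 1)) * IA -> y * x * SA = - l * (x * (x + 1)) * IB ->
  SA * SB = - l * (x * y + 1) -> IA * IB * 2 = - l^-1 * (x * y) ->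
  (x * y) ^+ 2 * ((x - 1) * (y - 1)) = 0.
Proof.
move=> l_neq0 eB eA eS eI; set T := 2 * l * ((y * x * SA) * (x * y * SB)).
have T_sums : T = - (2 * l ^+ 2 * (x * y) ^+ 2 * (x * y + 1)).
  by transitivity (2 * l * (x * y) ^+ 2 * (SA * SB)); [rewrite /T; ring | rewrite eS; ring].
have T_invs : T = - (l ^+ 2 * (x * (x + 1)) * (y * (y + 1)) * (x * y)).
  rewrite /T eA eB; transitivity (l ^+ 3 * (x * (x + 1)) * (y * (y + 1)) * (IA * IB * 2)).
    by ring.
  rewrite eI; transitivity (- (l ^+ 2 * (x * (x + 1)) * (y * (y + 1)) * (x * y)) * (l * l^-1)).
    by ring.
  by rewrite mulfV // mulr1.
apply: (mulfI (expf_neq0 2 l_neq0)); rewrite mulr0.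
transitivity (- (l ^+ 2 * (x * (x + 1)) * (y * (y + 1)) * (x * y)) -
  - (2 * l ^+ 2 * (x * y) ^+ 2 * (x * y + 1))); first by ring.
by rewrite -T_sums -T_invs subrr.
Qed.

Lemma leq_double_proper_dvdn d q : (d %| q)%N -> (d < q)%N -> (2 * d <= q)%N.
Proof.
by case/dvdnP => k ->; case: k => [|[|k]]; rewrite ?mul0n ?mul1n ?ltnn // => _; apply: leq_mul.
Qed.

Section ProductSetEqualsShiftedSubgroup.
Variables (F : finFieldType) (G : {group {unit F}}) (lam : {unit F}) (A B : {set F}).
Hypotheses (charF : char_gt F (2 * #|G|)) (lamG : lam \in G).
Hypotheses (A0 : 0 \notin A) (B0 : 0 \notin B) (A_gt1 : (1 < #|A|)%N) (B_gt1 : (1 < #|B|)%N).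
Hypothesis AB : prodset A B = shift_nonzero G (val lam).

Local Notation d := #|G|.
Local Notation l := (val lam).

Lemma card_prodset_shift : #|prodset A B| = d.-1.
Proof. by rewrite AB card_shift_nonzero. Qed.

Lemma card_B_le_shift : (#|B| <= d.-1)%N.
Proof.
have /card_gt0P[a Aa] := ltnW A_gt1.
by rewrite -card_prodset_shift (card_prodset_ge B Aa) //; apply: contraNneq A0 => <-.
Qed.

Lemma prodset_shift_exp : {in A & B, forall a b, (a * b + l) ^+ d = 1}.
Proof. by move=> a b Aa Bb; apply: shift_nonzero_exp; rewrite -AB imset2_f. Qed.

Let d_gt1 : (1 < d)%N.
Proof. by have := card_B_le_shift; lia. Qed.

Let charF_stepanov : char_gt F (d + #|B|.-1).
Proof. by apply: char_gt_le charF; have := card_B_le_shift; lia. Qed.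

Let l_d : l ^+ d = 1.
Proof. by rewrite -val_unitX expg_cardG. Qed.

Lemma card_prodset_mul : (#|A| * #|B| = d.-1)%N.
Proof.
have := stepanov_bound A0 B0 (ltnW B_gt1) d_gt1 (unit_val_neq0 lam) l_d prodset_shift_exp
  charF_stepanov.
have := card_prodset_le A B; rewrite card_prodset_shift mulnS mulnC; lia.
Qed.

Lemma stepanov_identity_prodset :
  #|A|%:R * #|B|%:R * \sum_(b in B) b = - l * (#|B|%:R * (#|B|%:R + 1)) * \sum_(a in A) a^-1.
Proof.
rewrite -natrM card_prodset_mul natr1 -natrM.
apply: (stepanov_identity A0 B0 (ltnW B_gt1) d_gt1 (unit_val_neq0 lam) l_d prodset_shift_exp
  charF_stepanov).
by rewrite mulnS mulnC card_prodset_mul; lia.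
Qed.

Lemma sum_prodset_shift :
  (\sum_(a in A) a) * (\sum_(b in B) b) = - l * (#|A|%:R * #|B|%:R + 1).
Proof.
rewrite mulr_suml; under eq_bigr do rewrite mulr_sumr.
rewrite -(sum_prodset id) ?card_prodset_shift ?card_prodset_mul // AB.
rewrite (sum_shift_nonzero lamG) // sumrB sum_subgroup_val ?sumr_const ?d_gt1 //.
by rewrite -natrM card_prodset_mul natr1 (ltn_predK d_gt1) sub0r mulNr mulr_natr.
Qed.

Lemma sum_inv_prodset_shift :
  (\sum_(a in A) a^-1) * (\sum_(b in B) b^-1) * 2 = - l^-1 * (#|A|%:R * #|B|%:R).
Proof.
rewrite mulr_suml; under eq_bigr do rewrite mulr_sumr.
under eq_bigr do under eq_bigr do rewrite -invfM.
rewrite -(sum_prodset (fun s => s^-1)) ?card_prodset_shift ?card_prodset_mul // AB.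
rewrite (sum_shift_nonzero lamG) ?invr0 //.
by rewrite -natrM card_prodset_mul !mulr_natr sum_inv_shift.
Qed.

Lemma prodset_cards_factor_neq0 :
  (#|A|%:R * #|B|%:R) ^+ 2 * ((#|A|%:R - 1) * (#|B|%:R - 1)) != 0 :> F.
Proof.
have A_le : (#|A| <= d.-1)%N by rewrite -card_prodset_mul leq_pmulr // ltnW.
rewrite -natrM card_prodset_mul -[#|A|](prednK (ltnW A_gt1)) -[#|B|](prednK (ltnW B_gt1)).
rewrite -!natr1 !addrK !mulf_neq0 ?expf_neq0 ?charF //; have := card_B_le_shift; lia.
Qed.

End ProductSetEqualsShiftedSubgroup.

Lemma prodset_neq_shift_nonzero (F : finFieldType) (G : {group {unit F}}) (lam : {unit F})
    (A B : {set F}) :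
  char_gt F (2 * #|G|) -> lam \in G -> 0 \notin A -> 0 \notin B ->
  (1 < #|A|)%N -> (1 < #|B|)%N -> prodset A B != shift_nonzero G (val lam).
Proof.
move=> charF lamG A0 B0 A_gt1 B_gt1; apply/eqP => AB.
have BA : prodset B A = shift_nonzero G (val lam) by rewrite prodsetC.
have := prodset_relations_degenerate (unit_val_neq0 lam)
  (stepanov_identity_prodset charF lamG A0 B0 A_gt1 B_gt1 AB)
  (stepanov_identity_prodset charF lamG B0 A0 B_gt1 A_gt1 BA)
  (sum_prodset_shift charF lamG A0 B0 A_gt1 B_gt1 AB)
  (sum_inv_prodset_shift charF lamG A0 B0 A_gt1 B_gt1 AB).
by move/eqP; apply/negP; apply: (prodset_cards_factor_neq0 charF lamG A0 B0 A_gt1 B_gt1 AB).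
Qed.

Unset Implicit Arguments.

Theorem theorem1p10 (p : nat) (hp : prime p) (hodd : odd p)
  (G : {group {unit 'F_p}}) (hG : G \proper [set: {unit 'F_p}])
  (lam : {unit 'F_p}) (hlam : lam \in G) :
  ~ (exists A B : {set 'F_p},
        [/\ 0 \notin A, 0 \notin B, (1 < #|A|)%N, (1 < #|B|)%N &
            prodset A B = shift_nonzero G (val lam)]).
Proof.
case=> A [B [A0 B0 A_gt1 B_gt1 AB]].
have card_units : #|[set: {unit 'F_p}]| = p.-1 by rewrite card_finField_unit card_Fp.
have charF : char_gt 'F_p (2 * #|G|).
  apply: char_gt_le (char_gt_Fp hp); rewrite -card_units.
  by apply: leq_double_proper_dvdn; [apply: cardSg; apply: subsetT | apply: proper_card].
by move: AB; apply/eqP; apply: prodset_neq_shift_nonzero.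
Qed.
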